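(* Let $N\ge1$, $K\ge1$, $n_v\ge0$. For a row-stochastic matrix $\mathbf{T}\in[0,1]^{K\times K}$ let $\mathbf{P}_{\mathbf{T}}\in[0,1]^{K^N\times K^N}$ denote the associated global transition matrix. Then the map $\mathbf{T}\mapsto\mathbf{P}_{\mathbf{T}}$, restricted to irreducible aperiodic row-stochastic matrices $\mathbf{T}$, is one-to-one. Furthermore, for such $\mathbf{T}$, let $\pi$ be the unique invariant measure of $\mathbf{P}_{\mathbf{T}}$, let $\tilde\pi$ be the unique invariant measure of $\mathbf{T}$, and for $n\in[N]$ let $\pi_n$ be the $n$-th marginal of $\pi$, i.e. $\pi_n(k)=\lim_{t\to\infty}\mathbb{P}(X_n(t)=k)$ for $k\in[K]$, where $X(\cdot)$ is the Markov chain with transition matrix $\mathbf{P}_{\mathbf{T}}$. Then $\pi_n=\tilde\pi$ for every $n\in[N]$.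
   Context: Vertices $[N]=\{1,\dots,N\}$ are arranged on a cycle; for $n\in[N]$, $V_n\subset[N]$ is the set of residues modulo $N$ of $n-n_v,\dots,n+n_v$, and $|V_n|$ its cardinality. The global transition matrix is $\mathbf{P}_{\mathbf{T}}(x,y)=\prod_{n=1}^N \frac{1}{|V_n|}\sum_{i\in V_n}\mathbf{T}_{x_i,y_n}$ for $x,y\in[K]^N$ (the transition matrix of the probabilistic cellular automaton with local transition matrix $\mathbf{T}$). *)

From mathcomp Require Import all_boot all_order all_algebra.
Set Implicit Arguments. Unset Strict Implicit. Unset Printing Implicit Defensive.
Import Order.TTheory GRing.Theory Num.Theory.
Local Open Scope ring_scope.

(* Vertices [N] are represented 0-based as 'I_N, states [K] as 'I_K. *)

Definition config (N K : nat) := {ffun 'I_N -> 'I_K}.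

(* V_n = residues mod N of n - nv, ..., n + nv; the residue of n + d - nv
   (d = 0..2nv) is computed as (n + N*nv + d - nv) mod N (no truncation
   happens since N >= 1 whenever 'I_N is inhabited). *)
Definition nbhd (N nv : nat) (n : 'I_N) : {set 'I_N} :=
  [set i : 'I_N | [exists d : 'I_(nv.*2.+1),
      val i == (n + N * nv + d - nv) %% N]%N].

Definition PT {R : numFieldType} (N K nv : nat) (T : 'M[R]_K)
  (x y : config N K) : R :=
  \prod_(n : 'I_N)
     ((#|nbhd nv n|%:R)^-1 * \sum_(i in nbhd nv n) T (x i) (y n)).

Definition row_stochastic {R : numDomainType} (K : nat) (T : 'M[R]_K) : Prop :=
  (forall i j, 0 <= T i j) /\ (forall i, \sum_j T i j = 1).

(* matrix powers T^m (defined by iteration so that any K is allowed) *)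
Definition mxpow {R : nzRingType} (K : nat) (T : 'M[R]_K) (m : nat) : 'M[R]_K :=
  iter m (fun A => A *m T) 1%:M.

Definition irreducible_mx {R : numDomainType} (K : nat) (T : 'M[R]_K) : Prop :=
  forall i j, exists m : nat, 0 < mxpow T m i j.

Definition aperiodic_mx {R : numDomainType} (K : nat) (T : 'M[R]_K) : Prop :=
  forall i, forall d : nat,
    (forall m : nat, (0 < m)%N -> 0 < mxpow T m i i -> (d %| m)%N) -> d = 1%N.

Definition invariant_measure {R : numDomainType} (S : finType)
  (P : S -> S -> R) (pi : S -> R) : Prop :=
  [/\ forall x, 0 <= pi x, \sum_x pi x = 1 &
      forall y, \sum_x pi x * P x y = pi y].

Definition marginal {R : nzRingType} (N K : nat) (pi : config N K -> R)
  (n : 'I_N) (k : 'I_K) : R :=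
  \sum_(x : config N K | x n == k) pi x.
Arguments PT {R} N K nv T x y.
Arguments marginal {R} {N K} pi n k.

From mathcomp Require Import all_boot all_order all_algebra.
Import Order.TTheory GRing.Theory Num.Theory.
Local Open Scope ring_scope.

(* The marginals mu_m of an invariant measure of P_T satisfy
   mu_m = |V_m|^-1 sum_(i in V_m) mu_i T, and so does the constant family
   equal to the invariant measure of T.  Their difference nu has zero-sum
   rows.  At a vertex m0 where the l1 norm of nu_m is maximal the triangle
   inequality in this averaging must be an equality, which makes both
   |nu_m0| + nu_m0 and |nu_m0| - nu_m0 subinvariant for T up to a positive
   factor.  By irreducibility such a nonnegative vector vanishes everywhere
   or nowhere; since nu_m0 sums to zero, nu_m0 = 0, so the maximal norm, and
   hence every nu_m, is 0.  Injectivity is simpler: P_T maps the constant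
   configurations a...a and b...b to T(a,b)^N. *)

Lemma ler_sum_eq {R : numDomainType} {I : finType} (F G : I -> R) :
  (forall i, F i <= G i) -> \sum_i G i <= \sum_i F i -> forall i, F i = G i.
Proof.
move=> leFG leGF i; apply/esym/eqP; rewrite -subr_eq0; apply/eqP.
have sum0 : \sum_j (G j - F j) = 0.
  by apply/eqP; rewrite eq_le sumrB subr_le0 subr_ge0 leGF ler_sum.
by apply: (psumr_eq0P _ sum0) => // j _; rewrite subr_ge0.
Qed.

Lemma norm_add_self_ge0 {R : realDomainType} (x : R) : 0 <= `|x| + x.
Proof. by rewrite -lerBlDr sub0r -normrN ler_norm. Qed.

Lemma norm_add_self_gt0 {R : realDomainType} (x : R) : (0 < `|x| + x) = (0 < x).
Proof.
case: (ltrP 0 x) => [x_gt0 | x_le0]; first by rewrite gtr0_norm // addr_gt0.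
by rewrite ler0_norm // addNr ltxx.
Qed.

Lemma mxpow_ge0 {R : numDomainType} {K} {T : 'M[R]_K} :
  (forall i j, 0 <= T i j) -> forall m i j, 0 <= mxpow T m i j.
Proof.
move=> T_ge0; elim=> [|m IHm] i j; first by rewrite mxE ler0n.
by rewrite /mxpow iterS mxE; apply: sumr_ge0 => l _; apply: mulr_ge0.
Qed.

Section Subinvariant.
Context {R : realFieldType} {K : nat} {T : 'M[R]_K} {w : 'I_K -> R} {s : R}.
Hypothesis T_ge0 : forall i j, 0 <= T i j.
Hypotheses (s_gt0 : 0 < s) (w_ge0 : forall a, 0 <= w a).
Hypothesis w_sub : forall k, s * \sum_a w a * T a k <= w k.

Lemma subinvariant_mxpow m k : s ^+ m * \sum_a w a * mxpow T m a k <= w k.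
Proof.
elim: m k => [|m IHm] k.
  rewrite expr0 mul1r (bigD1 k) //= big1 ?addr0 ?mxE ?eqxx ?mulr1 //.
  by move=> a /negbTE nak; rewrite mxE nak mulr0.
apply: le_trans (w_sub k).
have -> : s ^+ m.+1 * \sum_a w a * mxpow T m.+1 a k =
          s * \sum_b (s ^+ m * \sum_a w a * mxpow T m a b) * T b k.
  rewrite exprS -mulrA; congr (s * _).
  under eq_bigr do rewrite /mxpow iterS mxE big_distrr /=.
  rewrite exchange_big big_distrr /=; apply: eq_bigr => b _.
  rewrite -mulrA mulr_suml; congr (_ * _); apply: eq_bigr => a _.
  by rewrite mulrA.
by rewrite ler_pM2l // ler_sum // => b _; rewrite ler_wpM2r.
Qed.

Lemma subinvariant_gt0 : irreducible_mx T -> forall a k, 0 < w a -> 0 < w k.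
Proof.
move=> T_irr a k wa_gt0; have [m Tm_gt0] := T_irr a k.
apply: lt_le_trans (subinvariant_mxpow m k).
rewrite mulr_gt0 ?exprn_gt0 // (bigD1 a) //=.
rewrite ltr_wpDr ?mulr_gt0 // sumr_ge0 // => i _.
by rewrite mulr_ge0 ?mxpow_ge0.
Qed.

End Subinvariant.

Lemma zero_sum_subinvariant_le0 {R : realFieldType} {K} {T : 'M[R]_K}
    {nu : 'I_K -> R} {s : R} :
  (forall i j, 0 <= T i j) -> irreducible_mx T -> 0 < s -> \sum_a nu a = 0 ->
  (forall k, s * \sum_a (`|nu a| + nu a) * T a k <= `|nu k| + nu k) ->
  forall j, nu j <= 0.
Proof.
move=> T_ge0 T_irr s_gt0 nu_sum0 nu_sub j; rewrite leNgt; apply/negP => nuj_gt0.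
have nu_gt0 k : 0 < nu k.
  have := subinvariant_gt0 T_ge0 s_gt0 (fun a => norm_add_self_ge0 (nu a)) nu_sub T_irr j k.
  by rewrite !norm_add_self_gt0; apply.
have : 0 < \sum_a nu a.
  by rewrite (bigD1 j) //= ltr_wpDr // sumr_ge0 // => k _; apply: ltW.
by rewrite nu_sum0 ltxx.
Qed.

Section NeighbourhoodAverage.
Context {R : realFieldType} {I : finType} (V : I -> {set I}) {K : nat} (T : 'M[R]_K).
Hypothesis V_refl : forall m, m \in V m.
Hypotheses (T_ge0 : forall a b, 0 <= T a b) (T_row : forall a, \sum_b T a b = 1).

Definition avg_step (nu : I -> 'I_K -> R) m j : R :=
  (#|V m|%:R)^-1 * \sum_(i in V m) \sum_a nu i a * T a j.

Lemma card_nbhd_gt0 m : 0 < #|V m|%:R :> R.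
Proof. by rewrite ltr0n card_gt0; apply/set0Pn; exists m. Qed.

Lemma avg_stepD nu mu m j :
  avg_step (fun i a => nu i a + mu i a) m j = avg_step nu m j + avg_step mu m j.
Proof.
rewrite /avg_step -mulrDr -big_split /=; congr (_ * _); apply: eq_bigr => i _.
by rewrite -big_split; apply: eq_bigr => a _; rewrite mulrDl.
Qed.

Lemma avg_stepN nu m j : avg_step (fun i a => - nu i a) m j = - avg_step nu m j.
Proof.
rewrite /avg_step -mulrN -sumrN; congr (_ * _); apply: eq_bigr => i _.
by rewrite -sumrN; apply: eq_bigr => a _; rewrite mulNr.
Qed.

Lemma avg_step_const (p : 'I_K -> R) m j :
  \sum_a p a * T a j = p j -> avg_step (fun _ => p) m j = p j.
Proof.
move=> pT; rewrite /avg_step (eq_bigr _ (fun i _ => pT)) sumr_const.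
by rewrite -[p j *+ _]mulr_natl mulrA mulVf ?mul1r // gt_eqF ?card_nbhd_gt0.
Qed.

Section MaximalNorm.
Context {nu : I -> 'I_K -> R} {m0 : I}.
Hypothesis nu_fixed : forall m j, nu m j = avg_step nu m j.
Hypothesis m0_max : forall i, \sum_a `|nu i a| <= \sum_a `|nu m0 a|.

Lemma max_norm_avg_step j : `|nu m0 j| = avg_step (fun i a => `|nu i a|) m0 j.
Proof.
have c_gt0 := card_nbhd_gt0 m0.
apply: (ler_sum_eq (fun k => `|nu m0 k|)) => [k|].
  rewrite nu_fixed /avg_step normrM ger0_norm ?invr_ge0 ?(ltW c_gt0) //.
  rewrite ler_pM2l ?invr_gt0 //.
  apply: le_trans (ler_norm_sum _ _ _) _; apply: ler_sum => i _.
  apply: le_trans (ler_norm_sum _ _ _) _; apply: ler_sum => a _.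
  by rewrite normrM (ger0_norm (T_ge0 a k)).
rewrite /avg_step -big_distrr exchange_big /=.
rewrite -(ler_pM2l c_gt0) mulrA mulfV ?gt_eqF // mul1r.
have -> : \sum_(i in V m0) \sum_k \sum_a `|nu i a| * T a k =
          \sum_(i in V m0) \sum_a `|nu i a|.
  apply: eq_bigr => i _; rewrite exchange_big; apply: eq_bigr => a _.
  by rewrite -big_distrr /= T_row mulr1.
apply: le_trans (ler_sum _ (fun i _ => m0_max i)) _.
by rewrite sumr_const mulr_natl.
Qed.

Lemma max_norm_add_self_subinvariant j :
  (#|V m0|%:R)^-1 * \sum_a (`|nu m0 a| + nu m0 a) * T a j <= `|nu m0 j| + nu m0 j.
Proof.
rewrite max_norm_avg_step nu_fixed -avg_stepD /avg_step.
rewrite ler_pM2l ?invr_gt0 ?card_nbhd_gt0 // (bigD1 m0) //= lerDl.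
apply: sumr_ge0 => i _; apply: sumr_ge0 => a _.
by rewrite mulr_ge0 ?norm_add_self_ge0.
Qed.

End MaximalNorm.

Hypothesis T_irr : irreducible_mx T.

Lemma avg_step_fixed_eq0 nu :
  (forall m j, nu m j = avg_step nu m j) -> (forall m, \sum_a nu m a = 0) ->
  forall m a, nu m a = 0.
Proof.
move=> nu_fixed nu_sum0 m a.
have [m0 _ m0_max] := @arg_maxP _ _ I m xpredT (fun i => \sum_a `|nu i a|) isT.
have {}m0_max i : \sum_a `|nu i a| <= \sum_a `|nu m0 a| := m0_max i isT.
have s_gt0 : 0 < (#|V m0|%:R)^-1 :> R by rewrite invr_gt0 card_nbhd_gt0.
have nuN_fixed m' j : - nu m' j = avg_step (fun i b => - nu i b) m' j.
  by rewrite avg_stepN -nu_fixed.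
have nuN_sum0 m' : \sum_a - nu m' a = 0 by rewrite sumrN nu_sum0 oppr0.
have m0_maxN i : \sum_a `|- nu i a| <= \sum_a `|- nu m0 a|.
  rewrite (eq_bigr _ (fun b _ => normrN (nu i b))).
  by rewrite (eq_bigr _ (fun b _ => normrN (nu m0 b))) m0_max.
have le0 := zero_sum_subinvariant_le0 T_ge0 T_irr s_gt0 (nu_sum0 m0)
  (max_norm_add_self_subinvariant nu_fixed m0_max).
have ge0 := zero_sum_subinvariant_le0 T_ge0 T_irr s_gt0 (nuN_sum0 m0)
  (max_norm_add_self_subinvariant nuN_fixed m0_maxN).
have nu_m0 j : nu m0 j = 0 by apply/eqP; rewrite eq_le le0 -oppr_le0 ge0.
apply/eqP; rewrite -normr_le0.
apply: le_trans (_ : \sum_b `|nu m b| <= 0).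
  by rewrite (bigD1 a) //= lerDl sumr_ge0.
apply: le_trans (m0_max m) _.
by rewrite big1 // => b _; rewrite nu_m0 normr0.
Qed.

End NeighbourhoodAverage.

Lemma nbhd_self N nv (n : 'I_N) : n \in nbhd nv n.
Proof.
rewrite inE; apply/existsP.
have nv_lt : (nv < nv.*2.+1)%N by rewrite ltnS -addnn leq_addr.
exists (Ordinal nv_lt) => /=.
by rewrite addnK addnC mulnC modnMDl modn_small.
Qed.

Section GlobalTransition.
Variables (R : realFieldType) (N K nv : nat).

Lemma PT_const (T : 'M[R]_K) a b : PT N K nv T [ffun=> a] [ffun=> b] = T a b ^+ N.
Proof.
rewrite /PT -[in RHS](card_ord N) -prodr_const; apply: eq_bigr => n _.
under eq_bigr do rewrite !ffunE.
rewrite sumr_const -[T a b *+ _]mulr_natl mulrA mulVf ?mul1r //.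
by rewrite gt_eqF ?(card_nbhd_gt0 _ (@nbhd_self N nv)).
Qed.

Lemma PT_inj (T1 T2 : 'M[R]_K) : (0 < N)%N ->
  (forall a b, 0 <= T1 a b) -> (forall a b, 0 <= T2 a b) ->
  PT N K nv T1 = PT N K nv T2 -> T1 = T2.
Proof.
move=> N_gt0 T1_ge0 T2_ge0 eqPT; apply/matrixP => a b.
have := congr1 (fun P => P [ffun=> a] [ffun=> b]) eqPT.
by rewrite /= !PT_const => /eqP; rewrite eqrXn2 // => /eqP.
Qed.

Variable T : 'M[R]_K.
Hypothesis T_row : forall a, \sum_b T a b = 1.

Lemma PT_marginal (x : config N K) n k :
  \sum_(y : config N K | y n == k) PT N K nv T x y =
  (#|nbhd nv n|%:R)^-1 * \sum_(i in nbhd nv n) T (x i) k.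
Proof.
pose F (m : 'I_N) (j : 'I_K) := (#|nbhd nv m|%:R : R)^-1 *
  (\sum_(i in nbhd nv m) T (x i) j) * (if m == n then (j == k)%:R else 1).
have -> : \sum_(y : config N K | y n == k) PT N K nv T x y =
          \prod_(m : 'I_N) \sum_(j : 'I_K) F m j.
  rewrite bigA_distr_bigA big_mkcond /=; apply: eq_bigr => y _.
  rewrite /F big_split /= [\prod_(i < N) (if _ then _ else _)](bigD1 n) //=.
  rewrite [X in _ * (_ * X)]big1 ?mulr1; last by move=> m /negbTE ->.
  by rewrite eqxx /PT; case: (y n == k); rewrite ?mulr1 ?mulr0.
rewrite (bigD1 n) //= [X in _ * X]big1 ?mulr1.
  rewrite /F eqxx (bigD1 k) //= eqxx mulr1 [X in _ + X]big1 ?addr0 //.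
  by move=> j /negbTE ->; rewrite mulr0.
move=> m /negbTE mn; rewrite /F mn.
under eq_bigr do rewrite mulr1.
rewrite -big_distrr /= exchange_big /=.
under eq_bigr do rewrite T_row.
rewrite sumr_const -[1 *+ _]mulr_natl mulr1 mulVf //.
by rewrite gt_eqF ?(card_nbhd_gt0 _ (@nbhd_self N nv)).
Qed.

Lemma sum_marginal (pi : config N K -> R) n : \sum_a marginal pi n a = \sum_x pi x.
Proof. by rewrite [RHS](partition_big (fun x : config N K => x n) xpredT). Qed.

Lemma marginal_mulmx (pi : config N K -> R) i j :
  \sum_a marginal pi i a * T a j = \sum_x pi x * T (x i) j.
Proof.
rewrite [RHS](partition_big (fun x : config N K => x i) xpredT) //=.
by apply: eq_bigr => a _; rewrite big_distrl; apply: eq_bigr => x /eqP <-.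
Qed.

Lemma marginal_avg_step (pi : config N K -> R) :
  (forall y, \sum_x pi x * PT N K nv T x y = pi y) ->
  forall m j, marginal pi m j = avg_step (nbhd nv) T (marginal pi) m j.
Proof.
move=> pi_inv m j; rewrite /avg_step.
rewrite (eq_bigr _ (fun i _ => marginal_mulmx pi i j)).
rewrite /marginal; under [LHS]eq_bigr do rewrite -pi_inv.
rewrite exchange_big /=; under eq_bigr do rewrite -big_distrr /= PT_marginal.
rewrite exchange_big big_distrr /=; apply: eq_bigr => x _.
by rewrite -big_distrr mulrCA.
Qed.

Hypothesis T_ge0 : forall a b, 0 <= T a b.
Hypothesis T_irr : irreducible_mx T.

Lemma marginal_eq_stationary (pi : config N K -> R) (p : 'I_K -> R) :
  invariant_measure (PT N K nv T) pi -> invariant_measure (fun a b => T a b) p ->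
  forall n k, marginal pi n k = p k.
Proof.
move=> [_ pi_sum1 pi_inv] [_ p_sum1 p_inv] n k; apply/eqP; rewrite -subr_eq0; apply/eqP.
apply: (avg_step_fixed_eq0 _ T (@nbhd_self N nv) T_ge0 T_row T_irr
  (fun m a => marginal pi m a - p a)).
- move=> m j; rewrite avg_stepD avg_stepN -marginal_avg_step //.
  by rewrite (avg_step_const _ _ (@nbhd_self N nv)).
- by move=> m; rewrite sumrB sum_marginal pi_sum1 p_sum1 subrr.
Qed.

End GlobalTransition.

Theorem theorem3p2 (R : realFieldType) (N K nv : nat)
  (hN : (0 < N)%N) (hK : (0 < K)%N) :
  (forall T1 T2 : 'M[R]_K,
     row_stochastic T1 -> irreducible_mx T1 -> aperiodic_mx T1 ->
     row_stochastic T2 -> irreducible_mx T2 -> aperiodic_mx T2 ->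
     PT N K nv T1 = PT N K nv T2 -> T1 = T2)
  /\
  (forall T : 'M[R]_K,
     row_stochastic T -> irreducible_mx T -> aperiodic_mx T ->
     forall (pi : config N K -> R) (pit : 'I_K -> R),
       invariant_measure (PT N K nv T) pi ->
       invariant_measure (fun i j => T i j) pit ->
       forall (n : 'I_N) (k : 'I_K), marginal pi n k = pit k).
Proof.
split.
- move=> T1 T2 [T1_ge0 _] _ _ [T2_ge0 _] _ _.
  exact: PT_inj.
- move=> T [T_ge0 T_row] T_irr _.
  exact: marginal_eq_stationary.
Qed.
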